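(* Let $\alpha\in(1,\infty)$, let $p_X$ be a distribution on a finite set $\mathcal X$ and $p_{Y\mid X}$ a channel to a finite set $\mathcal Y$. Let $\tilde q^{(0)}_{Y\mid X}$ be an initial channel and, for $k\ge0$, define $$r^{(k)}_{X\mid Y}(x\mid y)=\frac{p_X(x)\tilde q^{(k)}_{Y\mid X}(y\mid x)}{\sum_{x'}p_X(x')\tilde q^{(k)}_{Y\mid X}(y\mid x')},\qquad \tilde q^{(k+1)}_{Y\mid X}(y\mid x)=\frac{p_{Y\mid X}(y\mid x)r^{(k)}_{X\mid Y}(x\mid y)^{1-1/\alpha}}{\sum_{y'}p_{Y\mid X}(y'\mid x)r^{(k)}_{X\mid Y}(x\mid y')^{1-1/\alpha}}.$$ Then $$\tilde F_\alpha^{\mathrm C}(\tilde q^{(0)}_{Y\mid X},r^{(0)}_{X\mid Y})\le\tilde F_\alpha^{\mathrm C}(\tilde q^{(1)}_{Y\mid X},r^{(0)}_{X\mid Y})\le\cdots\le\tilde F_\alpha^{\mathrm C}(\tilde q^{(k)}_{Y\mid X},r^{(k)}_{X\mid Y})\le\tilde F_\alpha^{\mathrm C}(\tilde q^{(k+1)}_{Y\mid X},r^{(k)}_{X\mid Y})\le\cdots\le I_\alpha^{\mathrm C}(X;Y).$$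
   Context: $\log$ is natural, $D$ is the Kullback–Leibler divergence, and $D_\alpha(p\|q):=\frac{1}{\alpha-1}\log\sum_zp(z)^\alpha q(z)^{1-\alpha}$ is the Rényi divergence. The Augustin–Csiszár mutual information is $I_\alpha^{\mathrm C}(X;Y):=\min_{q_Y}\sum_xp_X(x)D_\alpha(p_{Y\mid X}(\cdot\mid x)\|q_Y)$. For a channel $\tilde q_{Y\mid X}$ and a reverse channel $r_{X\mid Y}$ (a family of distributions $r_{X\mid Y}(\cdot\mid y)$ on $\mathcal X$), $\tilde F_\alpha^{\mathrm C}(\tilde q_{Y\mid X},r_{X\mid Y}):=\frac{\alpha}{1-\alpha}D(p_X\tilde q_{Y\mid X}\|p_Xp_{Y\mid X})+\mathbb E^{p_X\tilde q_{Y\mid X}}[\log\frac{r_{X\mid Y}(X\mid Y)}{p_X(X)}]$. *)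

From HB Require Import structures.
From mathcomp Require Import all_boot all_order all_algebra.
From mathcomp Require Import all_classical all_reals.
From mathcomp Require Import ereal exp.
Set Implicit Arguments. Unset Strict Implicit. Unset Printing Implicit Defensive.
Import Order.TTheory GRing.Theory Num.Theory.
Local Open Scope ring_scope.
Local Open Scope ereal_scope.

Section Defs.
Variable R : realType.

Definition is_dist (T : finType) (p : T -> R) : Prop :=
  (forall t, (0 <= p t)%R) /\ (\sum_(t : T) p t = 1)%R.

(* a channel W : X -> Y -> R, W x y = W(y|x) *)
Definition is_channel (X Y : finType) (W : X -> Y -> R) : Prop :=
  forall x, is_dist (W x).

Definition KL (T : finType) (p q : T -> R) : \bar R :=
  \sum_(t : T)
    (if p t == 0%R then 0
     else if q t == 0%R then +oo
     else ((p t) * ln (p t / q t))%:E).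

Definition renyi_div (a : R) (T : finType) (p q : T -> R) : \bar R :=
  if `[< exists t, (0 < p t)%R /\ q t = 0%R >] then +oo
  else ((a - 1)^-1 * ln (\sum_(t : T) (p t `^ a * q t `^ (1 - a))))%:E.

(* Augustin-Csiszar mutual information I_a^C(X;Y) = min_{q_Y} sum_x p_X(x) D_a(p_{Y|X}(.|x) || q_Y)
   (the min is written as an infimum over all distributions q_Y on Y) *)
Definition augustin_csiszar_MI (a : R) (X Y : finType) (pX : X -> R)
    (pYX : X -> Y -> R) : \bar R :=
  ereal_inf [set \sum_(x : X) ((pX x)%:E * renyi_div a (pYX x) qY)
            | qY in [set qY : Y -> R | is_dist qY]].

Definition joint (X Y : finType) (pX : X -> R) (W : X -> Y -> R) : X * Y -> R :=
  fun z => (pX z.1 * W z.1 z.2)%R.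

(* E^{p_X q}[ log (r(X|Y) / p_X(X)) ], with 0 * log(.) = 0 and
   c * log 0 = -oo for c > 0; r x y = r(x|y) *)
Definition exp_log_ratio (X Y : finType) (pX : X -> R) (q : X -> Y -> R)
    (r : X -> Y -> R) : \bar R :=
  \sum_(z : X * Y)
    (if joint pX q z == 0%R then 0
     else if r z.1 z.2 == 0%R then -oo
     else (joint pX q z * ln (r z.1 z.2 / pX z.1))%:E).

Definition FC (a : R) (X Y : finType) (pX : X -> R) (pYX : X -> Y -> R)
    (q : X -> Y -> R) (r : X -> Y -> R) : \bar R :=
  ((a / (1 - a))%:E * KL (joint pX q) (joint pX pYX)) + exp_log_ratio pX q r.

Definition r_of (X Y : finType) (pX : X -> R) (q : X -> Y -> R) : X -> Y -> R :=
  fun x y => (pX x * q x y / \sum_(x' : X) pX x' * q x' y)%R.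

Definition q_next (a : R) (X Y : finType) (pYX : X -> Y -> R) (r : X -> Y -> R)
    : X -> Y -> R :=
  fun x y => (pYX x y * r x y `^ (1 - a^-1) /
              \sum_(y' : Y) pYX x y' * r x y' `^ (1 - a^-1))%R.

Fixpoint q_iter (a : R) (X Y : finType) (pX : X -> R) (pYX : X -> Y -> R)
    (q0 : X -> Y -> R) (k : nat) : X -> Y -> R :=
  match k with
  | O => q0
  | S k' => q_next a pYX (r_of pX (q_iter a pX pYX q0 k'))
  end.

End Defs.

(** Where [q] charges no zero of [p_{Y|X}], [FC q r] is the finite sum of
    [p_X(x)] times [FC_row q r x = sum_y q (a/(1-a) ln (q/p_{Y|X}) + ln (r/p_X))];
    elsewhere it is [-oo]. Every inequality is then an instance of the log-sum
    inequality [sum q ln (u/q) <= (sum q) ln (sum u / sum q)]: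
    - as [a/(1-a) * (1 - 1/a) = -1], the row functional is
      [-(a/(1-a)) sum_y q ln (w/q) - ln p_X] for the Gibbs weights
      [w = p_{Y|X} r^(1-1/a)], which is maximal at [q] proportional to [w],
      i.e. at [q_next];
    - for fixed [q], replacing [r] by the posterior [r_of q] changes [FC] by
      [sum_y sum_x J ln (J/(S r))] with [J = p_X q] and [S = sum_x J], which is
      nonnegative because [sum_x r <= 1];
    - for any [q_Y], splitting the integrand as
      [1/(a-1) ln (p_{Y|X}^a q_Y^(1-a) / q) + ln (q_Y r / (p_X q))] bounds [FC]
      by [sum_x p_X D_a(p_{Y|X}(.|x) || q_Y) + ln (sum_{x,y} q_Y r)], and the
      last term is nonpositive. *)

From HB Require Import structures.
From mathcomp Require Import all_boot all_order all_algebra.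
From mathcomp Require Import all_classical all_reals.
From mathcomp Require Import ereal exp.
From mathcomp Require Import ring lra.
Import Order.TTheory GRing.Theory Num.Theory.
Local Open Scope ring_scope.

Set Implicit Arguments. Unset Strict Implicit.

Section LogSum.
Variables (R : realType) (T : finType).

Lemma ln_le_subr1 (c : R) : 0 < c -> ln c <= c - 1.
Proof. by move=> c0; have := @le_ln1Dx R (c - 1); rewrite addrCA subrr addr0; apply; lra. Qed.

Lemma psumr_gt0 (F : T -> R) t : (forall i, 0 <= F i) -> 0 < F t -> 0 < \sum_i F i.
Proof.
move=> F0 Ft; apply: (lt_le_trans Ft).
by rewrite (bigD1 t) //= lerDl sumr_ge0.
Qed.

Definition neg_kl (q u : T -> R) : R :=
  \sum_t (if q t == 0 then 0 else q t * ln (u t / q t)).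

Variables (q u : T -> R).
Hypotheses (q_ge0 : forall t, 0 <= q t) (u_ge0 : forall t, 0 <= u t)
  (u_gt0 : forall t, q t != 0 -> 0 < u t).

Lemma log_sum_le : 0 < \sum_t q t ->
  neg_kl q u <= (\sum_t q t) * ln ((\sum_t u t) / \sum_t q t).
Proof.
set Q := \sum_t q t; set U := \sum_t u t => Q_gt0.
have [t qt] : exists t, q t != 0.
  have /psumr_neq0P[|t /andP[_ /lt0r_neq0]] : Q <> 0 by apply/eqP; rewrite gt_eqF.
    by move=> t _.
  by exists t.
have U_gt0 : 0 < U := psumr_gt0 u_ge0 (u_gt0 qt).
(* tangent-line bound [ln c <= c - 1] at [c = (u t / q t) / (U / Q)] *)
apply: (le_trans (y := \sum_t (q t * ln (U / Q) + (u t * Q / U - q t)))).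
  apply: ler_sum => {qt}t _; case: ifPn => [/eqP ->|qt].
    by rewrite mul0r subr0 add0r !mulr_ge0 // ?invr_ge0 ltW.
  have qt_gt0 : 0 < q t by rewrite lt0r qt q_ge0.
  have ut_gt0 := u_gt0 qt.
  set c := (u t / q t) / (U / Q).
  have -> : u t / q t = (U / Q) * c by rewrite /c mulrCA divff ?mulr1 // gt_eqF ?divr_gt0.
  rewrite lnM ?posrE ?divr_gt0 // mulrDr lerD2l.
  apply: (le_trans (y := q t * (c - 1))); first by rewrite ler_pM2l // ln_le_subr1 ?divr_gt0.
  by rewrite le_eqVlt /c; apply/orP; left; apply/eqP; field; rewrite !gt_eqF.
rewrite big_split /= -mulr_suml -/Q big_split /= sumrN -!mulr_suml -/U.
by rewrite mulrAC divff ?gt_eqF // mul1r subrr addr0.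
Qed.

Lemma neg_kl_le0 : \sum_t u t <= \sum_t q t -> neg_kl q u <= 0.
Proof.
move=> uq; have [Q0|Q_neq0] := eqVneq (\sum_t q t) 0.
  rewrite /neg_kl big1 // => t _.
  by rewrite (psumr_eq0P (fun t _ => q_ge0 t) Q0) ?eqxx.
have Q_gt0 : 0 < \sum_t q t by rewrite lt0r Q_neq0 sumr_ge0.
apply: (le_trans (log_sum_le Q_gt0)).
by rewrite pmulr_rle0 //; apply: ln_le0; rewrite ler_pdivrMr // mul1r.
Qed.

Lemma neg_kl_le_ln : \sum_t q t = 1 -> neg_kl q u <= ln (\sum_t u t).
Proof. by move=> q1; have := log_sum_le; rewrite q1 divr1 mul1r; apply. Qed.

End LogSum.

Lemma neg_kl_normalized (R : realType) (T : finType) (u : T -> R) :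
  0 < \sum_t u t -> neg_kl (fun t => u t / \sum_t' u t') u = ln (\sum_t u t).
Proof.
set U := \sum_t u t => U_gt0.
transitivity (\sum_t u t / U * ln U); last by rewrite -!mulr_suml -/U divff ?gt_eqF ?mul1r.
apply: eq_bigr => t _; case: ifPn => [/eqP -> //|ut]; first by rewrite mul0r.
have ut_neq0 : u t != 0 by move: ut; rewrite mulf_eq0 negb_or => /andP[].
by rewrite invf_div mulrCA divff ?mulr1.
Qed.

Section FCObjective.
Variables (R : realType) (a : R) (X Y : finType) (p : X -> R) (W : X -> Y -> R).
Hypotheses (a_gt1 : 1 < a) (p_ge0 : forall x, 0 <= p x)
  (W_ge0 : forall x y, 0 <= W x y).

Let a_gt0 : 0 < a. Proof. exact: lt_trans ltr01 a_gt1. Qed.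
Let a_neq0 : a != 0. Proof. exact: lt0r_neq0 a_gt0. Qed.
Let a_sub1_neq0 : a - 1 != 0. Proof. by rewrite subr_eq0 gt_eqF. Qed.
Let one_sub_a_neq0 : 1 - a != 0. Proof. by rewrite subr_eq0 lt_eqF. Qed.
Let gibbs_exponent_neq0 : 1 - a^-1 != 0.
Proof. by rewrite subr_eq0 gt_eqF // invf_lt1. Qed.

Definition FC_row (q r : X -> Y -> R) (x : X) : R :=
  \sum_y (if q x y == 0 then 0
          else q x y * (a / (1 - a) * ln (q x y / W x y) + ln (r x y / p x))).

Definition FC_support (q r : X -> Y -> R) : Prop :=
  forall x y, p x != 0 -> q x y != 0 -> W x y != 0 /\ r x y != 0.

Lemma FC_supportE (q r : X -> Y -> R) :
  FC_support q r -> FC a p W q r = (\sum_x p x * FC_row q r x)%:E.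
Proof.
move=> supp; rewrite /FC /KL /exp_log_ratio.
have joint_neq0 z : joint p q z != 0 -> (p z.1 != 0) && (q z.1 z.2 != 0).
  by rewrite -negb_or -mulf_eq0.
rewrite (eq_bigr (fun z => (if joint p q z == 0 then 0
    else joint p q z * ln (joint p q z / joint p W z))%:E)); last first.
  move=> z _; case: ifPn => // /joint_neq0/andP[px qz].
  have [Wz _] := supp _ _ px qz.
  by rewrite /joint mulf_eq0 (negbTE px) (negbTE Wz).
rewrite [X in _ + X](eq_bigr (fun z => (if joint p q z == 0 then 0
    else joint p q z * ln (r z.1 z.2 / p z.1))%:E)); last first.
  move=> z _; case: ifPn => // /joint_neq0/andP[px qz].
  by have [_ /negbTE ->] := supp _ _ px qz.
rewrite !sumEFin -EFinM -EFinD mulr_sumr -big_split; congr EFin.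
under [RHS]eq_bigr do rewrite /FC_row mulr_sumr.
rewrite pair_big; apply: eq_bigr => -[x y] _; rewrite /joint /=.
have [->|px] := eqVneq (p x) 0; first by rewrite !mul0r eqxx mulr0 addr0.
have [->|qy] := eqVneq (q x y) 0; first by rewrite !mulr0 eqxx mulr0 addr0.
rewrite mulf_eq0 (negbTE px) (negbTE qy) /= -mulf_div divff // mul1r.
ring.
Qed.

Lemma FC_unsupported (q r : X -> Y -> R) x y :
  p x != 0 -> q x y != 0 -> W x y = 0 -> (FC a p W q r = -oo)%E.
Proof.
move=> px qy Wy; rewrite /FC.
have -> : KL (joint p q) (joint p W) = +oo%E.
  apply/eqP; rewrite esum_eqy.
    apply/existsP; exists (x, y).
    by rewrite /joint /= mulf_eq0 (negbTE px) (negbTE qy) Wy mulr0 eqxx.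
  by move=> z _; case: ifPn => // _; case: ifPn.
by rewrite lt0_muley ?addNye // lte_fin pmulr_rlt0 // invr_lt0 subr_lt0.
Qed.

Lemma FC_support_gt0 (q r : X -> Y -> R) x y :
  (forall y, 0 <= q x y) -> (forall y, 0 <= r x y) -> FC_support q r ->
  0 < p x -> q x y != 0 -> [/\ 0 < q x y, 0 < W x y & 0 < r x y].
Proof.
move=> q_ge0 r_ge0 supp px qy; have [Wy ry] := supp x y (lt0r_neq0 px) qy.
by rewrite !lt0r qy Wy ry q_ge0 W_ge0 r_ge0.
Qed.

Definition gibbs_weight (r : X -> Y -> R) (x : X) (y : Y) : R :=
  W x y * r x y `^ (1 - a^-1).

Lemma gibbs_weight_ge0 (r : X -> Y -> R) x y : 0 <= gibbs_weight r x y.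
Proof. by rewrite mulr_ge0 ?powR_ge0. Qed.

Lemma q_next_ge0 (r : X -> Y -> R) x y : 0 <= q_next a W r x y.
Proof. by rewrite divr_ge0 ?sumr_ge0 // => *; apply: gibbs_weight_ge0. Qed.

Lemma sum_q_next (r : X -> Y -> R) x :
  0 < \sum_y gibbs_weight r x y -> \sum_y q_next a W r x y = 1.
Proof. by move=> Z_gt0; rewrite /q_next -mulr_suml divff ?gt_eqF. Qed.

Lemma q_next_support (r : X -> Y -> R) : FC_support (q_next a W r) r.
Proof.
move=> x y _; rewrite /q_next mulf_eq0 negb_or => /andP[+ _].
rewrite mulf_eq0 negb_or => /andP[Wy ry]; split=> //.
by apply: contraNneq ry => ->; rewrite powR0.
Qed.

Lemma FC_row_gibbsE (q r : X -> Y -> R) x :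
  0 < p x -> (forall y, 0 <= q x y) -> (forall y, 0 <= r x y) -> FC_support q r ->
  FC_row q r x = - (a / (1 - a)) * neg_kl (q x) (gibbs_weight r x)
                 - (\sum_y q x y) * ln (p x).
Proof.
move=> px q_ge0 r_ge0 supp.
rewrite /FC_row /neg_kl mulr_sumr mulr_suml -sumrB; apply: eq_bigr => y _.
case: ifPn => [/eqP ->|qy]; first by rewrite mulr0 mul0r subr0.
have [qy_gt0 Wy_gt0 ry_gt0] := FC_support_gt0 q_ge0 r_ge0 supp px qy.
rewrite /gibbs_weight !ln_div ?posrE ?mulr_gt0 ?powR_gt0 // lnM ?posrE ?powR_gt0 //.
by rewrite ln_powR; field; rewrite one_sub_a_neq0 a_neq0.
Qed.

Lemma FC_row_le_q_next (q r : X -> Y -> R) x :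
  0 < p x -> (forall y, 0 <= q x y) -> (forall y, 0 <= r x y) ->
  \sum_y q x y = 1 -> FC_support q r -> 0 < \sum_y gibbs_weight r x y ->
  FC_row q r x <= FC_row (q_next a W r) r x.
Proof.
move=> px q_ge0 r_ge0 q1 supp Z_gt0.
rewrite (FC_row_gibbsE px q_ge0 r_ge0 supp).
rewrite (FC_row_gibbsE px (q_next_ge0 r x) r_ge0 (q_next_support (r:=r))).
rewrite q1 sum_q_next // neg_kl_normalized // lerD2r ler_pM2l; last first.
  by rewrite oppr_gt0 pmulr_rlt0 // invr_lt0 subr_lt0.
apply: neg_kl_le_ln => // [y|y qy]; first exact: gibbs_weight_ge0.
have [_ Wy ry] := FC_support_gt0 q_ge0 r_ge0 supp px qy.
by rewrite mulr_gt0 ?powR_gt0.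
Qed.

Lemma FC_row_renyiE (q r : X -> Y -> R) (Q : Y -> R) x :
  0 < p x -> (forall y, 0 <= q x y) -> (forall y, 0 <= r x y) -> FC_support q r ->
  (forall y, 0 < W x y -> 0 < Q y) ->
  FC_row q r x =
    (a - 1)^-1 * neg_kl (q x) (fun y => W x y `^ a * Q y `^ (1 - a))
    + neg_kl (q x) (fun y => Q y * r x y / p x).
Proof.
move=> px q_ge0 r_ge0 supp WQ.
rewrite /FC_row /neg_kl mulr_sumr -big_split; apply: eq_bigr => y _ /=.
case: ifPn => [_|qy]; first by rewrite mulr0 addr0.
have [qy_gt0 Wy_gt0 ry_gt0] := FC_support_gt0 q_ge0 r_ge0 supp px qy.
have Qy_gt0 := WQ y Wy_gt0.
rewrite !ln_div ?posrE ?mulr_gt0 ?invr_gt0 ?powR_gt0 //.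
rewrite !lnM ?posrE ?powR_gt0 // ?mulr_gt0 ?invr_gt0 // !ln_powR.
by field; rewrite a_sub1_neq0 one_sub_a_neq0.
Qed.

Lemma FC_row_le_renyi (q r : X -> Y -> R) (Q : Y -> R) x :
  0 < p x -> (forall y, 0 <= q x y) -> (forall y, 0 <= r x y) ->
  \sum_y q x y = 1 -> FC_support q r ->
  (forall y, 0 <= Q y) -> (forall y, 0 < W x y -> 0 < Q y) ->
  FC_row q r x <= (a - 1)^-1 * ln (\sum_y W x y `^ a * Q y `^ (1 - a))
                        + ln (\sum_y Q y * r x y / p x).
Proof.
move=> px q_ge0 r_ge0 q1 supp Q_ge0 WQ.
rewrite (FC_row_renyiE px q_ge0 r_ge0 supp WQ).
have pos y : q x y != 0 -> [/\ 0 < W x y, 0 < Q y & 0 < r x y].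
  by move=> /(FC_support_gt0 q_ge0 r_ge0 supp px)[_ Wy ry]; split; rewrite ?WQ.
apply: lerD; first apply: ler_wpM2l; first by rewrite invr_ge0 subr_ge0 ltW.
- apply: neg_kl_le_ln => // [y|y /pos[Wy Qy _]].
    exact: mulr_ge0 (powR_ge0 _ _) (powR_ge0 _ _).
  exact: mulr_gt0 (powR_gt0 _ Wy) (powR_gt0 _ Qy).
- apply: neg_kl_le_ln => // [y|y /pos[_ Qy ry]].
    by rewrite !mulr_ge0 // invr_ge0 ltW.
  by rewrite !mulr_gt0 // invr_gt0.
Qed.

Lemma sum_FC_row_le_renyi (q r : X -> Y -> R) (Q : Y -> R) :
  \sum_x p x = 1 -> (forall x y, 0 <= q x y) -> (forall x y, 0 <= r x y) ->
  (forall x, 0 < p x -> \sum_y q x y = 1) -> (forall y, \sum_x r x y <= 1) ->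
  FC_support q r -> (forall y, 0 <= Q y) -> \sum_y Q y = 1 ->
  (forall x y, 0 < p x -> 0 < W x y -> 0 < Q y) ->
  \sum_x p x * FC_row q r x <=
  \sum_x p x * ((a - 1)^-1 * ln (\sum_y W x y `^ a * Q y `^ (1 - a))).
Proof.
move=> p1 q_ge0 r_ge0 q1 r1 supp Q_ge0 Q1 WQ.
pose u x := \sum_y Q y * r x y.
have u_ge0 x : 0 <= u x by rewrite sumr_ge0 // => y _; rewrite mulr_ge0.
have u_gt0 x : p x != 0 -> 0 < u x.
  move=> px; have px_gt0 : 0 < p x by rewrite lt0r px p_ge0.
  have /psumr_neq0P[//|y /andP[_ qy]] : \sum_y q x y <> 0.
    by rewrite q1 //; exact/eqP/oner_neq0.
  have [_ Wy ry] := FC_support_gt0 (q_ge0 x) (r_ge0 x) supp px_gt0 (lt0r_neq0 qy).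
  apply: (psumr_gt0 _ (mulr_gt0 (WQ x y px_gt0 Wy) ry)) => y'.
  exact: mulr_ge0.
have sum_u_le1 : \sum_x u x <= \sum_x p x.
  rewrite p1 exchange_big -Q1 /=; apply: ler_sum => y _.
  by rewrite -mulr_sumr ler_piMr.
apply: (le_trans (y := \sum_x p x * ((a - 1)^-1 * ln (\sum_y W x y `^ a * Q y `^ (1 - a)))
                       + neg_kl p u)); last by rewrite gerDl neg_kl_le0.
rewrite /neg_kl -big_split; apply: ler_sum => x _ /=.
have [->|px] := eqVneq (p x) 0; first by rewrite !mul0r addr0.
have px_gt0 : 0 < p x by rewrite lt0r px p_ge0.
rewrite -mulrDr ler_pM2l // /u mulr_suml.
exact: FC_row_le_renyi px_gt0 (q_ge0 x) (r_ge0 x) (q1 x px_gt0) supp Q_ge0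
  (fun y => WQ x y px_gt0).
Qed.

Lemma r_of_ge0 (q : X -> Y -> R) :
  (forall x y, 0 <= q x y) -> forall x y, 0 <= r_of p q x y.
Proof.
move=> q_ge0 x y; rewrite divr_ge0 ?mulr_ge0 ?sumr_ge0 // => x' _.
exact: mulr_ge0.
Qed.

Lemma sum_r_of_le1 (q : X -> Y -> R) y : \sum_x r_of p q x y <= 1.
Proof.
rewrite /r_of -mulr_suml.
have [->|S_neq0] := eqVneq (\sum_x p x * q x y) 0; first by rewrite mul0r ler01.
by rewrite divff.
Qed.

Lemma r_of_gt0 (q : X -> Y -> R) x y :
  (forall x y, 0 <= q x y) -> p x != 0 -> q x y != 0 -> 0 < r_of p q x y.
Proof.
move=> q_ge0 px qy.
have J_gt0 : 0 < p x * q x y by rewrite mulr_gt0 // lt0r ?px ?qy ?p_ge0 ?q_ge0.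
rewrite divr_gt0 // (psumr_gt0 _ J_gt0) // => x'.
exact: mulr_ge0.
Qed.

Lemma FC_support_r_of (q r : X -> Y -> R) :
  (forall x y, 0 <= q x y) -> FC_support q r -> FC_support q (r_of p q).
Proof.
move=> q_ge0 supp x y px qy; split; first by case: (supp x y px qy).
exact/lt0r_neq0/r_of_gt0.
Qed.

Lemma sum_FC_row_sub_r_of (q r : X -> Y -> R) :
  (forall x y, 0 <= q x y) -> (forall x y, 0 <= r x y) -> FC_support q r ->
  \sum_x p x * FC_row q r x - \sum_x p x * FC_row q (r_of p q) x =
  \sum_y neg_kl (fun x => p x * q x y) (fun x => (\sum_x' p x' * q x' y) * r x y).
Proof.
move=> q_ge0 r_ge0 supp; rewrite -sumrB.
under eq_bigr do rewrite /FC_row !mulr_sumr -sumrB.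
rewrite exchange_big; apply: eq_bigr => y _; apply: eq_bigr => x _ /=.
set S := \sum_x' p x' * q x' y.
have [->|px] := eqVneq (p x) 0; first by rewrite !(mul0r, eqxx) subrr.
have [->|qy] := eqVneq (q x y) 0; first by rewrite !(mulr0, eqxx) subrr.
have px_gt0 : 0 < p x by rewrite lt0r px p_ge0.
have [qy_gt0 Wy_gt0 ry_gt0] := FC_support_gt0 (q_ge0 x) (r_ge0 x) supp px_gt0 qy.
have J_gt0 : 0 < p x * q x y by rewrite mulr_gt0.
have S_gt0 : 0 < S by apply: (psumr_gt0 _ J_gt0) => x'; exact: mulr_ge0.
rewrite mulf_eq0 (negbTE px) (negbTE qy) /= /r_of -/S.
rewrite !ln_div ?posrE ?divr_gt0 ?mulr_gt0 // !lnM ?posrE ?mulr_gt0 //.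
ring.
Qed.

Lemma sum_FC_row_le_r_of (q r : X -> Y -> R) :
  (forall x y, 0 <= q x y) -> (forall x y, 0 <= r x y) ->
  (forall y, \sum_x r x y <= 1) -> FC_support q r ->
  \sum_x p x * FC_row q r x <= \sum_x p x * FC_row q (r_of p q) x.
Proof.
move=> q_ge0 r_ge0 r1 supp; rewrite -subr_le0 sum_FC_row_sub_r_of //.
apply: sumr_le0 => y _; set S := \sum_x p x * q x y.
have J_ge0 x : 0 <= p x * q x y by rewrite mulr_ge0.
apply: neg_kl_le0 => // [x|x Jx|]; first by rewrite mulr_ge0 ?sumr_ge0.
  have /andP[px qy] : (p x != 0) && (q x y != 0) by rewrite -negb_or -mulf_eq0.
  have [_ ry] := supp x y px qy.
  have S_gt0 : 0 < S by apply: (psumr_gt0 J_ge0 (t := x)); rewrite lt0r Jx J_ge0.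
  by rewrite mulr_gt0 // lt0r ry r_ge0.
by rewrite -mulr_sumr ler_piMr ?sumr_ge0.
Qed.

Definition admissible (q : X -> Y -> R) : Prop :=
  (forall x y, 0 <= q x y) /\
  (forall x, 0 < p x -> \sum_y q x y = 1 /\ exists y, 0 < W x y /\ 0 < q x y).

Lemma sum_gibbs_weight_r_of_gt0 (q : X -> Y -> R) x :
  admissible q -> 0 < p x -> 0 < \sum_y gibbs_weight (r_of p q) x y.
Proof.
move=> [q_ge0 adm] px; have [_ [y [Wy qy]]] := adm x px.
apply: (psumr_gt0 _ (t := y)) => [y'|]; first exact: gibbs_weight_ge0.
by rewrite mulr_gt0 // powR_gt0 // r_of_gt0 // lt0r_neq0.
Qed.

Lemma admissible_q_next (q : X -> Y -> R) :
  admissible q -> admissible (q_next a W (r_of p q)).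
Proof.
move=> admq; split=> [x y|x px]; first exact: q_next_ge0.
have Z_gt0 := sum_gibbs_weight_r_of_gt0 admq px.
split; first exact: sum_q_next.
have [q_ge0 /(_ x px) [_ [y [Wy qy]]]] := admq.
exists y; split=> //; rewrite divr_gt0 // mulr_gt0 // powR_gt0 //.
by rewrite r_of_gt0 // lt0r_neq0.
Qed.

Lemma admissible_q_iter (q0 : X -> Y -> R) k :
  admissible q0 -> admissible (q_iter a p W q0 k).
Proof. by move=> adm0; elim: k => [|k IH] //=; exact: admissible_q_next. Qed.

Local Open Scope ereal_scope.

Lemma FC_le_q_next (q : X -> Y -> R) : admissible q ->
  FC a p W q (r_of p q) <= FC a p W (q_next a W (r_of p q)) (r_of p q).
Proof.
move=> admq; have [q_ge0 adm] := admq.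
have [[x [y [px qy Wy]]]|supp] :=
  pselect (exists x y, [/\ p x != 0, q x y != 0 & W x y = 0])%R.
  by rewrite (FC_unsupported _ px qy Wy) ?leNye.
have suppq : FC_support q (r_of p q).
  move=> x y px qy; split; last exact/lt0r_neq0/r_of_gt0.
  by apply/eqP => Wy; apply: supp; exists x, y.
rewrite (FC_supportE suppq) (FC_supportE (q_next_support (r := r_of p q))) lee_fin.
apply: ler_sum => x _; have [->|px] := eqVneq (p x) 0%R; first by rewrite !mul0r.
have px_gt0 : (0 < p x)%R by rewrite lt0r px p_ge0.
have [q1 _] := adm x px_gt0.
have rq_ge0 y : (0 <= r_of p q x y)%R := r_of_ge0 q_ge0 x y.
have Z_gt0 := sum_gibbs_weight_r_of_gt0 admq px_gt0.
by rewrite ler_pM2l //; apply: FC_row_le_q_next px_gt0 (q_ge0 x) rq_ge0 q1 suppq Z_gt0.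
Qed.

Lemma FC_le_r_of (q r : X -> Y -> R) :
  (forall x y, 0 <= q x y)%R -> (forall x y, 0 <= r x y)%R ->
  (forall y, \sum_x r x y <= 1)%R -> FC_support q r ->
  FC a p W q r <= FC a p W q (r_of p q).
Proof.
move=> q_ge0 r_ge0 r1 supp.
rewrite (FC_supportE supp) (FC_supportE (FC_support_r_of q_ge0 supp)) lee_fin.
exact: sum_FC_row_le_r_of.
Qed.

Lemma sum_renyi_div_eqy (Q : Y -> R) x y :
  (0 < p x)%R -> (0 < W x y)%R -> Q y = 0%R ->
  \sum_x (p x)%:E * renyi_div a (W x) Q = +oo.
Proof.
move=> px Wy Qy; apply/eqP; rewrite esum_eqy.
  apply/existsP; exists x; rewrite /renyi_div asboolT; last by exists y.
  by rewrite gt0_muley.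
move=> x' _; rewrite /renyi_div; case: asboolP => _ //.
have [->|px'] := eqVneq (p x') 0%R; first by rewrite mul0e.
by rewrite gt0_muley // lte_fin lt0r px' p_ge0.
Qed.

Lemma sum_renyi_divE (Q : Y -> R) :
  (forall x y, 0 < p x -> 0 < W x y -> 0 < Q y)%R ->
  \sum_x (p x)%:E * renyi_div a (W x) Q =
  (\sum_x p x * ((a - 1)^-1 * ln (\sum_y W x y `^ a * Q y `^ (1 - a))))%:E.
Proof.
move=> WQ; rewrite -sumEFin; apply: eq_bigr => x _.
have [->|px] := eqVneq (p x) 0%R; first by rewrite mul0e mul0r.
rewrite /renyi_div asboolF // => -[y [Wy Qy]].
have px_gt0 : (0 < p x)%R by rewrite lt0r px p_ge0.
by move: (WQ x y px_gt0 Wy); rewrite Qy ltxx.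
Qed.

Lemma FC_le_sum_renyi (q r : X -> Y -> R) (Q : Y -> R) :
  (\sum_x p x = 1)%R -> (forall x y, 0 <= q x y)%R -> (forall x y, 0 <= r x y)%R ->
  (forall x, 0 < p x -> \sum_y q x y = 1)%R -> (forall y, \sum_x r x y <= 1)%R ->
  FC_support q r -> is_dist Q ->
  FC a p W q r <= \sum_x (p x)%:E * renyi_div a (W x) Q.
Proof.
move=> p1 q_ge0 r_ge0 q1 r1 supp [Q_ge0 Q1].
have [[x [y [px Wy Qy]]]|noQ] :=
  pselect (exists x y, [/\ 0 < p x, 0 < W x y & Q y = 0])%R.
  by rewrite (sum_renyi_div_eqy px Wy Qy) leey.
have WQ x y : (0 < p x -> 0 < W x y -> 0 < Q y)%R.
  by move=> px Wy; rewrite lt0r Q_ge0 andbT; apply/eqP => Qy; apply: noQ; exists x, y.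
rewrite (FC_supportE supp) sum_renyi_divE // lee_fin.
exact: sum_FC_row_le_renyi.
Qed.

Lemma FC_le_augustin_csiszar_MI (q r : X -> Y -> R) :
  (\sum_x p x = 1)%R -> (forall x y, 0 <= q x y)%R -> (forall x y, 0 <= r x y)%R ->
  (forall x, 0 < p x -> \sum_y q x y = 1)%R -> (forall y, \sum_x r x y <= 1)%R ->
  FC_support q r -> FC a p W q r <= augustin_csiszar_MI a p W.
Proof.
move=> p1 q_ge0 r_ge0 q1 r1 supp.
by apply: le_ereal_inf_tmp => _ [Q distQ <-]; exact: FC_le_sum_renyi.
Qed.

End FCObjective.

Local Open Scope ereal_scope.

Theorem lemma3 (R : realType) (a : R) (X Y : finType) (pX : X -> R)
    (pYX : X -> Y -> R) (q0 : X -> Y -> R) :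
  (1 < a)%R ->
  is_dist pX -> is_channel pYX -> is_channel q0 ->
  (* well-definedness of q^{(1)} on the support of p_X *)
  (forall x, (0 < pX x)%R -> exists y, (0 < pYX x y)%R /\ (0 < q0 x y)%R) ->
  forall k : nat,
    let qk := q_iter a pX pYX q0 k in
    let qk1 := q_iter a pX pYX q0 k.+1 in
    [/\ FC a pX pYX qk (r_of pX qk) <= FC a pX pYX qk1 (r_of pX qk),
        FC a pX pYX qk1 (r_of pX qk) <= FC a pX pYX qk1 (r_of pX qk1),
        FC a pX pYX qk (r_of pX qk) <= augustin_csiszar_MI a pX pYX &
        FC a pX pYX qk1 (r_of pX qk) <= augustin_csiszar_MI a pX pYX].
Proof.
move=> a_gt1 [p_ge0 p1] W_dist q0_dist q0_supp k qk qk1.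
have W_ge0 x y : (0 <= pYX x y)%R by case: (W_dist x).
have adm_qk : admissible pX pYX qk.
  apply: admissible_q_iter => //; split=> [x y|x px]; first by case: (q0_dist x).
  by split; [case: (q0_dist x) | exact: q0_supp].
have [qk1_ge0 qk1_rows] := admissible_q_next a p_ge0 W_ge0 adm_qk.
have step_q := FC_le_q_next a_gt1 p_ge0 W_ge0 adm_qk.
have rk_ge0 := r_of_ge0 p_ge0 (proj1 adm_qk).
have supp : FC_support pX pYX qk1 (r_of pX qk) by apply: q_next_support.
have bound : FC a pX pYX qk1 (r_of pX qk) <= augustin_csiszar_MI a pX pYX.
  apply: FC_le_augustin_csiszar_MI => // [x px|y]; first by case: (qk1_rows x px).
  exact: sum_r_of_le1.
split=> //; last exact: le_trans step_q bound.
by apply: FC_le_r_of => // y; exact: sum_r_of_le1.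
Qed.
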